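(* Every generalized approval-based committee scoring (GABCS) rule is a linear mapping.
   Context: Let $\mathcal A=[m]=\{1,\dots,m\}$ be the set of alternatives and $k\le m$; let $\mathcal A_k$ denote the set of all $k$-element subsets ($k$-committees) of $\mathcal A$. The preference space is $\mathcal E=2^{\mathcal A}$ (approval ballots). A profile is a finite nonempty sequence $P=(A_1,\dots,A_n)\in\mathcal E^n$, $n\ge1$; $\mathcal E^*=\bigcup_{n\ge1}\mathcal E^n$. The histogram $\mathrm{Hist}(P)\in\mathbb Z_{\ge0}^{|\mathcal E|}$ records for each $A\in\mathcal E$ the number of indices $j$ with $A_j=A$. A mapping $f:\mathcal E^*\to\mathcal D$ (with $\mathcal E,\mathcal D$ finite) is linear if there exist finitely many vectors $\vec h_1,\dots,\vec h_K\in\mathbb R^{|\mathcal E|}$ and a function $g:\{+,-,0\}^K\to\mathcal D$ such that for every profile $P$, $f(P)=g(\sigma_1,\dots,\sigma_K)$, where $\sigma_t$ is $+$, $-$ or $0$ according as $\mathrm{Hist}(P)\cdot\vec h_t$ is $>0$, $<0$ or $=0$. A GABCS rule is specified by a function $\mathbf s:2^{\mathcal A}\times\mathcal A_k\to\mathbb R$ and maps a profile $P$ to the set $\arg\max_{W\in\mathcal A_k}\sum_{j=1}^n\mathbf s(A_j,W)$ (a nonempty subset of $\mathcal A_k$); the decision space is $\mathcal D=2^{\mathcal A_k}$. *)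

From mathcomp Require Import all_boot all_order all_algebra.
Set Implicit Arguments. Unset Strict Implicit. Unset Printing Implicit Defensive.
Import Order.TTheory GRing.Theory Num.Theory.
Local Open Scope ring_scope.

(* Alternatives: 'I_m (a copy of [m] = {1..m}).
   Approval ballots: {set 'I_m} (= 2^A).  Profiles: nonempty seq of ballots. *)

Definition hist (m : nat) (P : seq {set 'I_m}) (A : {set 'I_m}) : nat :=
  count_mem A P.

Inductive sign3 := SPos | SNeg | SZero.

Definition sign_of (R : realFieldType) (x : R) : sign3 :=
  if 0 < x then SPos else if x < 0 then SNeg else SZero.

Definition hist_dot (R : realFieldType) (m : nat) (P : seq {set 'I_m})
  (h : {set 'I_m} -> R) : R :=
  \sum_(A : {set 'I_m}) (hist P A)%:R * h A.

Definition linear_mapping (R : realFieldType) (m : nat) (D : Type)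
  (f : seq {set 'I_m} -> D) : Prop :=
  exists (K : nat) (h : 'I_K -> {set 'I_m} -> R) (g : ('I_K -> sign3) -> D),
    forall P : seq {set 'I_m}, (0 < size P)%N ->
      f P = g (fun t => sign_of (hist_dot P (h t))).

Definition committee (m k : nat) (W : {set 'I_m}) : bool := #|W| == k.

Definition total_score (R : realFieldType) (m : nat)
  (s : {set 'I_m} -> {set 'I_m} -> R) (P : seq {set 'I_m}) (W : {set 'I_m}) : R :=
  \sum_(A <- P) s A W.

(* GABCS rule: set of k-committees maximizing total score. The scoring
   function s is given on all pairs but only its values on (ballot, k-committee)
   pairs matter. *)
Definition gabcs (R : realFieldType) (m k : nat)
  (s : {set 'I_m} -> {set 'I_m} -> R) (P : seq {set 'I_m}) : {set {set 'I_m}} :=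
  [set W : {set 'I_m} | committee k W &&
     [forall W' : {set 'I_m}, committee k W' ==> (total_score s P W' <= total_score s P W)]].

(* Two committees W, W' compare through the sign of a single linear form of the
   histogram: total_score s P W - total_score s P W' = Hist(P) . (s _ W - s _ W').
   The set of score maximisers is thus a fixed Boolean combination of the signs
   of these finitely many forms, one for each ordered pair of committees. *)

From mathcomp Require Import all_boot all_order all_algebra.
Set Implicit Arguments. Unset Strict Implicit. Unset Printing Implicit Defensive.
Import Order.TTheory GRing.Theory Num.Theory.
Local Open Scope ring_scope.

Definition nonneg_sign (z : sign3) : bool := if z is SNeg then false else true.

Lemma nonneg_sign_of (R : realFieldType) (x : R) : nonneg_sign (sign_of x) = (0 <= x).
Proof.
rewrite /sign_of; case: ltrP => [x_gt0 | x_le0]; first by rewrite ltW.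
by case: ltrP => [x_lt0 | x_ge0] //=; rewrite x_ge0.
Qed.

Section Linearity.

Variables (R : realFieldType) (m : nat).
Implicit Types (P : seq {set 'I_m}) (h : {set 'I_m} -> R).

Lemma hist_dotE P h : hist_dot P h = \sum_(A <- P) h A.
Proof.
rewrite /hist_dot /hist; elim: P => [|B P IH].
  by rewrite big_nil big1 // => A _; rewrite mul0r.
rewrite big_cons -IH.
under eq_bigr => A _ do rewrite /= natrD mulrDl mulr_natl mulrb eq_sym.
by rewrite big_split -big_mkcond big_pred1_eq.
Qed.

Lemma le_sum_scores (C : Type) (s : {set 'I_m} -> C -> R) P c c' :
  (\sum_(A <- P) s A c' <= \sum_(A <- P) s A c)
    = nonneg_sign (sign_of (hist_dot P (fun A => s A c - s A c'))).
Proof. by rewrite nonneg_sign_of hist_dotE sumrB subr_ge0. Qed.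

Lemma argmax_score_linear (C : finType) (feasible : pred C)
    (s : {set 'I_m} -> C -> R) :
  linear_mapping R (fun P => [set c | feasible c & [forall c' in feasible,
    \sum_(A <- P) s A c' <= \sum_(A <- P) s A c]]).
Proof.
exists #|{: C * C}|, (fun t A => s A (enum_val t).1 - s A (enum_val t).2).
exists (fun z => [set c | feasible c &
  [forall c' in feasible, nonneg_sign (z (enum_rank (c, c')))]]).
move=> P _; apply/setP => c; rewrite !inE; congr (_ && _).
by apply: eq_forallb => c'; rewrite enum_rankK le_sum_scores.
Qed.

End Linearity.

Theorem theorem1 (R : realFieldType) (m k : nat) (hkm : (k <= m)%N)
  (s : {set 'I_m} -> {set 'I_m} -> R) :
  linear_mapping R (gabcs k s).
Proof.
exact: argmax_score_linear.
Qed.
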